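(* The function $f$ is well defined on $(0,\infty)$, differentiable, and satisfies for all $\theta>0$ \[1=4\lambda(\theta)+\exp\big(-f'(\theta)\big).\]
   Context: Define $\lambda:[0,\infty)\to(0,1/4]$ by $\lambda(0)=1/4$ and, for $\theta>0$, $\lambda(\theta)$ is the unique $\lambda\in(0,1/4)$ with $-1+\frac{\operatorname{artanh}(\sqrt{1-4\lambda})}{\sqrt{1-4\lambda}}=\theta$ (this map is a strictly decreasing bijection from $(0,1/4)$ onto $(0,\infty)$). For $\theta>0$ set $f(\theta)=-\ln\lambda(\theta)-2\theta-\theta\ln\big(1-4\lambda(\theta)\big)$. *)

From Stdlib Require Import Reals ClassicalEpsilon.
From Coquelicot Require Import Coquelicot.
Open Scope R_scope.

Definition artanh (x : R) : R := / 2 * ln ((1 + x) / (1 - x)).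

Definition theta_of (l : R) : R :=
  -1 + artanh (sqrt (1 - 4 * l)) / sqrt (1 - 4 * l).

(* lambda(0) = 1/4; for theta > 0, the (unique) l in (0,1/4) with theta_of l = theta,
   chosen by Hilbert's epsilon (existence/uniqueness is part of the theorem). *)
Definition lam (t : R) : R :=
  match Req_EM_T t 0 with
  | left _ => / 4
  | right _ => epsilon (inhabits 0) (fun l => 0 < l < / 4 /\ theta_of l = t)
  end.

Definition f_theta (t : R) : R :=
  - ln (lam t) - 2 * t - t * ln (1 - 4 * lam t).

From Stdlib Require Import Reals Lra Ranalysis5 ClassicalEpsilon.
From Coquelicot Require Import Coquelicot.
Open Scope R_scope.

(* Substitute s = sqrt (1 - 4 lambda) in (0,1).  Then theta = artanh s / s - 1 is a
   strictly increasing bijection of (0,1) onto (0,oo), because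
   artanh s < s / (1 - s^2), and lambda(theta) = (1 - s(theta)^2) / 4 where s is its
   inverse.  Written as a function of s, f has derivative -ln (s^2) * dtheta/ds, so by
   the inverse function rule f'(theta) = -ln (s^2) = -ln (1 - 4 lambda(theta)). *)

Lemma continuity_pt_is_derive (f : R -> R) x l : is_derive f x l -> continuity_pt f x.
Proof. intros Hf. apply derivable_continuous_pt. exists l. now apply is_derive_Reals. Qed.

Lemma nondecreasing_derive_ge0 (f df : R -> R) a b : a <= b ->
  (forall x, a <= x <= b -> is_derive f x (df x) /\ 0 <= df x) -> f a <= f b.
Proof.
  intros Hab Hf. destruct (Req_dec a b) as [<-|Hne]; [lra|].
  destruct (MVT_gen f a b df) as [c [Hc Hmvt]];
    rewrite ?Rmin_left, ?Rmax_right in * by lra.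
  - intros x Hx. apply Hf. lra.
  - intros x Hx. apply (continuity_pt_is_derive _ _ (df x)), Hf. lra.
  - assert (0 <= df c * (b - a)) by (apply Rmult_le_pos; [apply Hf|]; lra). lra.
Qed.

Lemma increasing_derive_gt0 (f df : R -> R) a b :
  (forall s, a < s < b -> is_derive f s (df s)) -> (forall s, a < s < b -> 0 < df s) ->
  forall x y, a < x -> x < y -> y < b -> f x < f y.
Proof.
  intros Hf Hdf. apply (incr_function f a b df); simpl; intros s Ha Hb.
  - apply Hf. lra.
  - apply Hdf. lra.
Qed.

Section InverseFunction.

Variables (f df g : R -> R) (a b lb ub : R).
Hypothesis f_derive : forall s, a < s < b -> is_derive f s (df s).
Hypothesis df_gt0 : forall s, a < s < b -> 0 < df s.
Hypothesis g_range : forall u, lb <= u <= ub -> a < g u < b.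
Hypothesis gK : forall u, lb <= u <= ub -> f (g u) = u.

Lemma inverse_le u v : lb <= u -> u <= v -> v <= ub -> g u <= g v.
Proof.
  intros Hu Huv Hv. destruct (Rle_or_lt (g u) (g v)) as [|Hlt]; [easy|].
  assert (Hgu := g_range u ltac:(lra)). assert (Hgv := g_range v ltac:(lra)).
  assert (f (g v) < f (g u)) as Hf
    by (apply (increasing_derive_gt0 f df a b f_derive df_gt0); lra).
  rewrite !gK in Hf by lra. lra.
Qed.

Lemma continuity_pt_inverse x : lb < x < ub -> continuity_pt g x.
Proof.
  intros Hx.
  assert (Hglb := g_range lb ltac:(lra)). assert (Hgub := g_range ub ltac:(lra)).
  assert (Hlu : g lb < g ub).
  { destruct (Rle_lt_or_eq_dec _ _ (inverse_le lb ub ltac:(lra) ltac:(lra) ltac:(lra)))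
      as [|E]; [easy|].
    apply (f_equal f) in E. rewrite !gK in E; lra. }
  apply (continuity_pt_recip_interv f g (g lb) (g ub)); rewrite ?gK by lra; try easy.
  - intros u v Hu Huv Hv. apply (increasing_derive_gt0 f df a b f_derive df_gt0); lra.
  - intros u Hu1 Hu2. unfold comp, id. apply gK. lra.
  - intros u Hu1 Hu2. split; apply inverse_le; lra.
  - intros s Hs. apply (continuity_pt_is_derive _ _ (df s)), f_derive. lra.
Qed.

Lemma is_derive_inverse x : lb < x < ub -> is_derive g x (/ df (g x)).
Proof.
  intros Hx.
  assert (Prf : forall s, g lb <= s <= g ub -> derivable_pt f s).
  { intros s Hs. exists (df s). apply is_derive_Reals, f_derive.
    assert (Hglb := g_range lb ltac:(lra)). assert (Hgub := g_range ub ltac:(lra)). lra. }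
  assert (Hgx : g lb <= g x <= g ub) by (split; apply inverse_le; lra).
  assert (Hdf : derive_pt f (g x) (Prf (g x) Hgx) = df (g x)).
  { apply derive_pt_eq_0, is_derive_Reals, f_derive, g_range. lra. }
  apply is_derive_Reals. replace (/ df (g x)) with (1 / derive_pt f (g x) (Prf (g x) Hgx))
    by (rewrite Hdf; field; apply Rgt_not_eq, df_gt0, g_range; lra).
  apply (derivable_pt_lim_recip_interv f g lb ub x Prf); try lra.
  - apply continuity_pt_inverse. lra.
  - intros u Hu. unfold comp, id. apply gK. lra.
  - rewrite Hdf. apply Rgt_not_eq, df_gt0, g_range. lra.
Qed.

End InverseFunction.

Lemma is_derive_artanh x : -1 < x < 1 -> is_derive artanh x (/ (1 - x ^ 2)).
Proof.
  intros Hx. unfold artanh. auto_derive.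
  - repeat split; try lra. apply Rdiv_lt_0_compat; lra.
  - field. repeat split; nra.
Qed.

Lemma artanh_lt s : 0 < s < 1 -> artanh s < s / (1 - s ^ 2).
Proof.
  intros Hs.
  pose (gap := fun x => x / (1 - x ^ 2) - artanh x).
  pose (dgap := fun x => 2 * x ^ 2 / (1 - x ^ 2) ^ 2).
  assert (Hgap : forall x, -1 < x < 1 -> is_derive gap x (dgap x)).
  { intros x Hx. assert (Hd := is_derive_artanh x Hx). unfold gap, dgap. auto_derive.
    - repeat split; try nra. exists (/ (1 - x ^ 2)); exact Hd.
    - replace (Derive (fun y : R => artanh y) _) with (/ (1 - x ^ 2))
        by (symmetry; now apply is_derive_unique).
      field. nra. }
  assert (gap 0 <= gap (s / 2)).
  { apply (nondecreasing_derive_ge0 gap dgap); [lra|].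
    intros x Hx. split; [apply Hgap; lra|].
    unfold dgap. apply Rmult_le_pos; [nra|]. apply Rlt_le, Rinv_0_lt_compat. nra. }
  assert (gap (s / 2) < gap s).
  { apply (increasing_derive_gt0 gap dgap 0 1); try lra.
    - intros x Hx. apply Hgap. lra.
    - intros x Hx. unfold dgap. apply Rdiv_lt_0_compat; [nra|]. apply pow_lt. nra. }
  assert (gap 0 = 0).
  { unfold gap, artanh. replace ((1 + 0) / (1 - 0)) with 1 by field. rewrite ln_1. field. }
  unfold gap in *. lra.
Qed.

Definition theta_s (s : R) : R := -1 + artanh s / s.

Definition dtheta_s (s : R) : R := (s / (1 - s ^ 2) - artanh s) / s ^ 2.

Lemma theta_of_sqrt l : theta_of l = theta_s (sqrt (1 - 4 * l)).
Proof. reflexivity. Qed.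

Lemma is_derive_theta_s s : 0 < s < 1 -> is_derive theta_s s (dtheta_s s).
Proof.
  intros Hs. assert (Hd := is_derive_artanh s ltac:(lra)). unfold theta_s, dtheta_s.
  auto_derive.
  - repeat split; try lra. exists (/ (1 - s ^ 2)); exact Hd.
  - replace (Derive (fun y : R => artanh y) _) with (/ (1 - s ^ 2))
      by (symmetry; now apply is_derive_unique).
    field. split; nra.
Qed.

Lemma dtheta_s_gt0 s : 0 < s < 1 -> 0 < dtheta_s s.
Proof.
  intros Hs. apply Rdiv_lt_0_compat; [|nra]. generalize (artanh_lt s Hs). lra.
Qed.

Lemma theta_s_increasing x y : 0 < x -> x < y -> y < 1 -> theta_s x < theta_s y.
Proof.
  apply (increasing_derive_gt0 theta_s dtheta_s);
    [apply is_derive_theta_s | apply dtheta_s_gt0].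
Qed.

Lemma theta_s_lt s : 0 < s < 1 -> theta_s s < s ^ 2 / (1 - s ^ 2).
Proof.
  intros Hs. assert (Hlt := artanh_lt s Hs). unfold theta_s.
  replace (s ^ 2 / (1 - s ^ 2)) with (-1 + (s / (1 - s ^ 2)) / s) by (field; nra).
  apply Rplus_lt_compat_l, Rmult_lt_compat_r; [apply Rinv_0_lt_compat|]; lra.
Qed.

Lemma theta_s_gt s : 0 < s < 1 -> - ln (1 - s) / 2 - 1 < theta_s s.
Proof.
  intros Hs. unfold theta_s, artanh.
  assert (Hln : - ln (1 - s) < ln ((1 + s) / (1 - s))).
  { rewrite <- ln_Rinv by lra. apply ln_increasing; [apply Rinv_0_lt_compat; lra|].
    unfold Rdiv. rewrite <- (Rmult_1_l (/ (1 - s))) at 1.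
    apply Rmult_lt_compat_r; [apply Rinv_0_lt_compat|]; lra. }
  assert (ln (1 - s) < 0) by (rewrite <- ln_1; apply ln_increasing; lra).
  set (A := / 2 * ln ((1 + s) / (1 - s))).
  assert (- ln (1 - s) / 2 < A) by (unfold A; lra).
  assert (A < A / s).
  { unfold Rdiv. rewrite <- (Rmult_1_r A) at 1. apply Rmult_lt_compat_l; [lra|].
    rewrite <- Rinv_1. apply Rinv_lt_contravar; lra. }
  lra.
Qed.

Lemma theta_s_surj t : 0 < t -> exists s, 0 < s < 1 /\ theta_s s = t.
Proof.
  intros Ht.
  (* [lo] solves lo^2 / (1 - lo^2) = t, [hi] solves - ln (1 - hi) / 2 - 1 = t. *)
  pose (lo := sqrt (t / (1 + t))).
  pose (hi := 1 - exp (- 2 * (t + 1))).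
  assert (Hlo2 : lo ^ 2 = t / (1 + t)) by (apply pow2_sqrt, Rlt_le, Rdiv_lt_0_compat; lra).
  assert (Hlo : 0 < lo < 1).
  { split; [apply sqrt_lt_R0, Rdiv_lt_0_compat; lra|].
    enough (lo ^ 2 < 1) by (assert (0 <= lo) by apply sqrt_pos; nra).
    rewrite Hlo2. apply Rmult_lt_reg_r with (1 + t); [lra|]. unfold Rdiv.
    rewrite Rmult_assoc, Rinv_l by lra. lra. }
  assert (Hexp : 0 < exp (- 2 * (t + 1)) < 1).
  { split; [apply exp_pos|]. rewrite <- exp_0 at 2. apply exp_increasing. lra. }
  assert (Hhi : 0 < hi < 1) by (unfold hi; lra).
  assert (Htlo : theta_s lo < t).
  { assert (E : lo ^ 2 / (1 - lo ^ 2) = t) by (rewrite Hlo2; field; lra).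
    rewrite <- E. now apply theta_s_lt. }
  assert (Hthi : t < theta_s hi).
  { assert (E : - ln (1 - hi) / 2 - 1 = t).
    { unfold hi. replace (1 - (1 - exp (- 2 * (t + 1)))) with (exp (- 2 * (t + 1))) by ring.
      rewrite ln_exp. field. }
    rewrite <- E. now apply theta_s_gt. }
  assert (Hlohi : lo < hi).
  { apply Rnot_le_lt. intros Hle. destruct (Rle_lt_or_eq_dec _ _ Hle) as [Hlt|E].
    - apply theta_s_increasing in Hlt; lra.
    - rewrite E in Hthi. lra. }
  destruct (IVT_interv (fun s => theta_s s - t) lo hi) as [s [Hs Es]]; try lra.
  - intros x Hx. apply continuity_pt_minus; [|apply continuity_pt_const; now intros ? ?].
    apply (continuity_pt_is_derive _ _ (dtheta_s x)), is_derive_theta_s. lra.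
  - exists s. split; lra.
Qed.

Lemma theta_of_unique_root t : 0 < t -> exists! l, 0 < l < / 4 /\ theta_of l = t.
Proof.
  intros Ht. destruct (theta_s_surj t Ht) as [s [Hs Es]].
  exists ((1 - s ^ 2) / 4). split.
  - split; [split; nra|].
    rewrite theta_of_sqrt. replace (1 - 4 * ((1 - s ^ 2) / 4)) with (s ^ 2) by field.
    rewrite sqrt_pow2 by lra. exact Es.
  - intros l [Hl El]. rewrite theta_of_sqrt in El.
    pose (s' := sqrt (1 - 4 * l)).
    assert (Hs'2 : s' ^ 2 = 1 - 4 * l) by (apply pow2_sqrt; lra).
    assert (Hs' : 0 < s' < 1) by (split; [apply sqrt_lt_R0; lra | nra]).
    enough (s = s') by (subst s'; nra).
    destruct (Rtotal_order s s') as [Hlt|[E|Hlt]]; [|exact E|];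
      apply theta_s_increasing in Hlt; fold s' in El; lra.
Qed.

Lemma lam_spec t : 0 < t -> 0 < lam t < / 4 /\ theta_of (lam t) = t.
Proof.
  intros Ht. unfold lam. destruct (Req_EM_T t 0) as [E|E]; [lra|].
  apply epsilon_spec. destruct (theta_of_unique_root t Ht) as [l [Hl _]]. now exists l.
Qed.

Definition sigma (t : R) : R := sqrt (1 - 4 * lam t).

Lemma sigma_spec t : 0 < t ->
  0 < sigma t < 1 /\ theta_s (sigma t) = t /\ sigma t ^ 2 = 1 - 4 * lam t.
Proof.
  intros Ht. destruct (lam_spec t Ht) as [Hl El].
  assert (Hs2 : sigma t ^ 2 = 1 - 4 * lam t) by (apply pow2_sqrt; lra).
  assert (0 < sigma t) by (apply sqrt_lt_R0; lra).
  repeat split; [lra | nra | exact El | exact Hs2].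
Qed.

Lemma is_derive_sigma t : 0 < t -> is_derive sigma t (/ dtheta_s (sigma t)).
Proof.
  intros Ht.
  apply (is_derive_inverse theta_s dtheta_s sigma 0 1 (t / 2) (2 * t)); try lra.
  - apply is_derive_theta_s.
  - apply dtheta_s_gt0.
  - intros u Hu. apply sigma_spec. lra.
  - intros u Hu. apply sigma_spec. lra.
Qed.

Definition f_s (s : R) : R :=
  - ln ((1 - s ^ 2) / 4) - 2 * theta_s s - theta_s s * ln (s ^ 2).

Lemma f_theta_sigma t : 0 < t -> f_theta t = f_s (sigma t).
Proof.
  intros Ht. destruct (sigma_spec t Ht) as [_ [Et Es]].
  unfold f_s, f_theta. rewrite Et, Es.
  now replace ((1 - (1 - 4 * lam t)) / 4) with (lam t) by field.
Qed.

(* Since theta_s s = artanh s / s - 1, the terms 2 s / (1 - s^2) - 2 theta_s' s - 2 theta_s s / s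
   of the derivative cancel identically. *)
Lemma is_derive_f_s s : 0 < s < 1 -> is_derive f_s s (- ln (s ^ 2) * dtheta_s s).
Proof.
  intros Hs. assert (Hd := is_derive_theta_s s Hs). unfold f_s. auto_derive.
  - repeat split; try nra; exists (dtheta_s s); exact Hd.
  - replace (Derive (fun y : R => theta_s y) _) with (dtheta_s s)
      by (symmetry; now apply is_derive_unique).
    replace (s * (s * 1)) with (s ^ 2) by ring. unfold dtheta_s, theta_s. field. split; nra.
Qed.

Lemma is_derive_f_theta t : 0 < t -> is_derive f_theta t (- ln (sigma t ^ 2)).
Proof.
  intros Ht. destruct (sigma_spec t Ht) as [Hs _].
  apply (is_derive_ext_loc (fun u => f_s (sigma u))).
  - apply (filter_imp (fun u => 0 < u)); [|now apply open_gt].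
    intros u Hu. symmetry. now apply f_theta_sigma.
  - replace (- ln (sigma t ^ 2))
      with (scal (/ dtheta_s (sigma t)) (- ln (sigma t ^ 2) * dtheta_s (sigma t))).
    + apply (is_derive_comp f_s sigma); [apply is_derive_f_s | apply is_derive_sigma]; lra.
    + assert (dtheta_s (sigma t) <> 0) by (apply Rgt_not_eq, dtheta_s_gt0; lra).
      unfold scal; simpl; unfold mult; simpl. field. easy.
Qed.

Theorem proposition2 :
  (forall t : R, 0 < t -> exists! l : R, 0 < l < / 4 /\ theta_of l = t) /\
  (forall t : R, 0 < t -> ex_derive f_theta t) /\
  (forall t : R, 0 < t -> 1 = 4 * lam t + exp (- Derive f_theta t)).
Proof.
  split; [exact theta_of_unique_root | split].
  - intros t Ht. eexists. now apply is_derive_f_theta.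
  - intros t Ht. rewrite (is_derive_unique _ _ _ (is_derive_f_theta t Ht)).
    destruct (sigma_spec t Ht) as [Hs [_ Es]].
    rewrite Ropp_involutive, exp_ln by (apply pow_lt; lra). lra.
Qed.
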